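(* Let $r$, $s$, $k$ and $n$ be positive integers with $r<k<n$ and $s+1<n$. Let $d=\gcd(s+1,n)$. If \[ k(s+1)+d-3\leq rn-1, \] then there exists an $(s,k,r)$-clash-free permutation of $\mathbb{Z}_n$.
   Context: For integers $u\leq v$, $[u,v]$ denotes the set of integers $i$ with $u\leq i\leq v$. For a subset $X\subseteq\mathbb{Z}_n$, define $||X||_n=\min\{t\in\mathbb{Z}\mid X\subseteq x+[0,t]\bmod n \text{ for some } x\in\mathbb{Z}_n\}$. For a permutation $\pi$ of $\mathbb{Z}_n$, an $(s,k,r)$-clash is a subset $X\subseteq\mathbb{Z}_n$ of cardinality $r+1$ such that $||X||_n<s$ and $||\pi(X)||_n<k$. The permutation $\pi$ is $(s,k,r)$-clash-free if it has no $(s,k,r)$-clashes. *)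

From mathcomp Require Import all_boot all_order all_fingroup.
Set Implicit Arguments. Unset Strict Implicit. Unset Printing Implicit Defensive.

(* Z_n is modelled by 'I_n, with element i representing the residue i mod n. *)

(* x + [0,t] mod n : the cyclic interval of length t+1 starting at x. *)
Definition cyc_interval (n : nat) (x : 'I_n) (t : nat) : pred 'I_n :=
  fun y => ((y + n - x) %% n <= t)%N.

Definition covered (n : nat) (X : {set 'I_n}) (t : nat) : Prop :=
  exists x : 'I_n, forall y, y \in X -> cyc_interval x t y.

(* ||X||_n < s, i.e. X is covered by x + [0,t] for some integer t < s.
   (Only t >= 0 matter for nonempty X, which is the only case used.) *)
Definition circ_width_lt (n : nat) (X : {set 'I_n}) (s : nat) : Prop :=
  exists t : nat, (t < s)%N /\ covered X t.

Definition clash (n s k r : nat) (pi : {perm 'I_n}) (X : {set 'I_n}) : Prop :=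
  #|X| = r.+1 /\ circ_width_lt X s /\ circ_width_lt (pi @: X) k.

Definition clash_free (n s k r : nat) (pi : {perm 'I_n}) : Prop :=
  forall X : {set 'I_n}, ~ clash s k r pi X.

From mathcomp Require Import all_boot all_order all_fingroup zify.

Set Implicit Arguments.
Unset Strict Implicit.
Unset Printing Implicit Defensive.

(* Write n = n' d with d = gcd (s+1) n and lag q = (n - 1 - q mod n) div n' < d.  The
   permutation inverts q |-> q (s+1) + lag q mod n, which is injective because q (s+1) mod n
   determines q mod n' while lag q determines the block of n' residues containing q.  Along
   a window of length k the unreduced values q (s+1) + lag q increase by at least s per step
   (lag drops by at most 1) and by at most (k-1)(s+1) + d - 1 overall, which is at most
   r n - s by hypothesis.  For a clash, these values (shifted by the start of an interval of
   length s containing the image) lie less than s above a multiple of n, so distinct ones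
   sit above distinct multiples among only r consecutive ones. *)

Lemma dvdn_mul_gcdr n m c : n %| c * m -> n %| c * gcdn m n.
Proof. by move=> dvd_n; rewrite muln_gcdr dvdn_gcd dvd_n dvdn_mull. Qed.

Lemma card_separated_le (T : finType) (P : {set T}) (a : T -> nat) (n s r : nat) :
  {in P, forall p, a p %% n < s} ->
  {in P &, forall p q, p != q -> (a p + s <= a q) || (a q + s <= a p)} ->
  {in P &, forall p q, a q + s <= a p + r * n} ->
  #|P| <= r.
Proof.
move=> res_lt sep spread.
have [->|[p0 Pp0]] := set_0Vmem P; first by rewrite cards0.
have n_gt0 : 0 < n.
  move: (res_lt p0 Pp0) (spread p0 p0 Pp0 Pp0).
  by case: n {res_lt sep spread} => // ; rewrite muln0 modn0; lia.
pose quo p := a p %/ n.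
have quo_window : {in P &, forall p q, quo q < quo p + r}.
  move=> p q Pp Pq; rewrite -(ltn_pmul2r n_gt0) mulnDl.
  have := res_lt p Pp; have := spread p q Pp Pq.
  have := divn_eq (a p) n; have := divn_eq (a q) n; rewrite /quo.
  move: (a p %/ n * n) (a q %/ n * n) (a p %% n) (a q %% n) => *; lia.
have quo_inj : {in P &, injective quo}.
  move=> p q Pp Pq eq_quo; apply/eqP; apply: contraT => /(sep p q Pp Pq).
  have := res_lt p Pp; have := res_lt q Pq.
  have := divn_eq (a p) n; have := divn_eq (a q) n; rewrite /quo in eq_quo.
  rewrite eq_quo; move: (a q %/ n * n) (a p %% n) (a q %% n) => *; lia.
have [p1 Pp1 quo_min] := arg_minnP quo Pp0.
rewrite cardE -(size_map quo) -(size_iota (quo p1) r).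
apply: uniq_leq_size.
  by rewrite map_inj_in_uniq ?enum_uniq // => p q; rewrite !mem_enum; exact: quo_inj.
move=> i /mapP [p]; rewrite mem_enum => Pp ->.
by rewrite mem_iota quo_min //= quo_window.
Qed.

Lemma cyc_offsetK n (z p : 'I_n) : (z + (p + n - z) %% n) %% n = p.
Proof.
rewrite modnDmr (_ : z + (p + n - z) = p + n); last by have := ltn_ord z; lia.
by rewrite modnDr modn_small.
Qed.

Section Stretch.

Variables n s n' d : nat.
Hypotheses (n_gt0 : 0 < n) (n_eq : n = n' * d).

Lemma n'_gt0 : 0 < n'.
Proof. by move: n_gt0; rewrite n_eq muln_gt0 => /andP[]. Qed.

Lemma d_gt0 : 0 < d.
Proof. by move: n_gt0; rewrite n_eq muln_gt0 => /andP[]. Qed.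

Definition lag q := (n.-1 - q %% n) %/ n'.

Definition stretch q := q * s.+1 + lag q.

Lemma lag_lt q : lag q < d.
Proof. by rewrite ltn_divLR ?n'_gt0 // mulnC -n_eq; lia. Qed.

Lemma lag_le_succ q : lag q <= (lag q.+1).+1.
Proof.
rewrite /lag; have q_lt := ltn_pmod q n_gt0.
have [q_last | q_not_last] := eqVneq (q %% n).+1 n.
  by rewrite (_ : n.-1 - q %% n = 0) ?div0n //; lia.
have -> : q.+1 %% n = (q %% n).+1 by rewrite -addn1 -modnDml addn1 modn_small; lia.
set y := n.-1 - (q %% n).+1.
have -> : n.-1 - q %% n = y + 1 by lia.
by rewrite -[(y %/ n').+1]addn1 -(divnDMl 1 y n'_gt0) leq_div2r //; lia.
Qed.

Lemma stretch_ge i j : stretch i + j * s <= stretch (i + j).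
Proof.
elim: j => [|j IHj]; first by rewrite addn0 mul0n addn0.
have := lag_le_succ (i + j); move: IHj; rewrite /stretch addnS !mulSn mulnDl; lia.
Qed.

Lemma stretch_le i j : stretch (i + j) <= stretch i + j * s.+1 + d.-1.
Proof. have := lag_lt (i + j); rewrite /stretch mulnDl; lia. Qed.

Lemma stretch_modn q : stretch q = stretch (q %% n) %[mod n].
Proof. by rewrite /stretch /lag modn_mod -modnDml -[RHS]modnDml modnMml. Qed.

Lemma lag_addn p c : p + c * n' < n -> lag p = lag (p + c * n') + c.
Proof.
move=> lt_n; rewrite /lag !modn_small; try lia.
by rewrite -(divnDMl c _ n'_gt0); congr (_ %/ _); lia.
Qed.

Hypothesis d_eq : d = gcdn s.+1 n.

Lemma succ_s_eq : s.+1 = s.+1 %/ d * d.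
Proof. by rewrite divnK // d_eq dvdn_gcdl. Qed.

Lemma stretch_modn_split p :
  stretch p %% n = (p * (s.+1 %/ d) %% n') * d + lag p.
Proof.
rewrite /stretch {1}succ_s_eq mulnA n_eq; set x := p * (s.+1 %/ d).
rewrite {1}(divn_eq x n') mulnDl -mulnA -addnA modnMDl modn_small //.
have := ltn_pmod x n'_gt0; have := lag_lt p; nia.
Qed.

Lemma stretch_inj p q : p < n -> q < n -> stretch p = stretch q %[mod n] -> p = q.
Proof.
wlog le_pq : p q / p <= q.
  move=> wlog_le p_lt q_lt eq_pq; case: (leqP p q) => [le_pq | /ltnW le_qp].
    exact: wlog_le.
  exact/esym/wlog_le.
move=> p_lt q_lt; rewrite !stretch_modn_split; set m' := s.+1 %/ d.
move=> /(congr1 (fun y => (y %/ d, y %% d))) /=.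
rewrite !divnMDl ?d_gt0 // !modnMDl !divn_small ?lag_lt // !addn0.
rewrite (modn_small (lag_lt p)) (modn_small (lag_lt q)).
case=> eq_mod eq_lag.
have dvd_m' : n' %| (q - p) * m'.
  by rewrite mulnBl -eqn_mod_dvd ?leq_mul2r ?le_pq ?orbT // eq_mod.
have : n' %| q - p.
  have : n %| (q - p) * gcdn s.+1 n.
    by apply: dvdn_mul_gcdr; rewrite succ_s_eq n_eq mulnA dvdn_pmul2r ?d_gt0.
  by rewrite -d_eq n_eq dvdn_pmul2r ?d_gt0.
case/dvdnP=> c qp_eq.
have := @lag_addn p c; rewrite -qp_eq subnKC // eq_lag => /(_ q_lt); lia.
Qed.

Definition stretch_ord (p : 'I_n) : 'I_n := Ordinal (ltn_pmod (stretch p) n_gt0).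

Lemma stretch_ord_inj : injective stretch_ord.
Proof.
move=> p q /(congr1 val) /= eq_pq; apply/val_inj.
exact: stretch_inj (ltn_ord p) (ltn_ord q) eq_pq.
Qed.

Definition stretch_perm : {perm 'I_n} := perm stretch_ord_inj.

Lemma stretch_perm_clash_free k r :
  k * s.+1 + d <= (r * n).+2 -> clash_free s k r stretch_perm^-1.
Proof.
move=> bound X [cardX [[t1 [t1_lt [x Xx]]] [t2 [t2_lt [z PXz]]]]].
set P := _ @: X in PXz.
have cardP : #|P| = r.+1 by rewrite card_imset //; exact: perm_inj.
pose o (p : 'I_n) := (p + n - z) %% n.
pose a p := stretch (z + o p) + n - x.
have o_inj : injective o.
  by move=> p q eq_o; apply/val_inj; rewrite /= -(cyc_offsetK z p) -/(o p) eq_o cyc_offsetK.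
have x_lt := ltn_ord x.
have a_ge p q : o p <= o q -> a p + (o q - o p) * s <= a q.
  move=> le_o; have := stretch_ge (z + o p) (o q - o p).
  by rewrite -addnA subnKC // /a; lia.
have a_le p q : o p <= o q -> a q <= a p + (o q - o p) * s.+1 + d.-1.
  move=> le_o; have := stretch_le (z + o p) (o q - o p).
  by rewrite -addnA subnKC // /a; lia.
have a_mod p : a p %% n = (stretch_perm p + n - x) %% n.
  rewrite /a -!addnBA ?(ltnW x_lt) // -modnDml stretch_modn cyc_offsetK.
  by rewrite permE /= modnDml.
have a_sep p q : o p < o q -> a p + s <= a q.
  move=> lt_o; apply: leq_trans (a_ge p q (ltnW lt_o)).
  by rewrite leq_add2l leq_pmull // subn_gt0.
have s_le : s <= r * n.
  have : s.+1 <= k * s.+1 by rewrite leq_pmull // (leq_ltn_trans _ t2_lt).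
  by have := d_gt0; lia.
suff : #|P| <= r by rewrite cardP ltnn.
apply: (@card_separated_le _ P a n s).
- move=> _ /imsetP [y Xy ->]; rewrite a_mod permKV.
  exact: leq_ltn_trans (Xx y Xy) t1_lt.
- move=> p q _ _ neq_pq; case: (ltngtP (o p) (o q)) => [lt_o | gt_o | eq_o].
  + by rewrite a_sep.
  + by rewrite (a_sep q p) ?orbT.
  + by rewrite (o_inj _ _ eq_o) eqxx in neq_pq.
move=> p q _ Pq; case: (leqP (o q) (o p)) => [le_o | lt_o].
  exact: leq_add (leq_trans (leq_addr _ _) (a_ge q p le_o)) s_le.
have : (o q - o p).+1 * s.+1 <= k * s.+1.
  by rewrite leq_mul2r; have := PXz q Pq; rewrite /cyc_interval -/(o q); lia.
by have := a_le p q (ltnW lt_o); have := d_gt0; rewrite mulSn; lia.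
Qed.

End Stretch.

Theorem theorem4 (r s k n : nat) :
  (0 < r)%N -> (0 < s)%N -> (0 < k)%N -> (0 < n)%N ->
  (r < k)%N -> (k < n)%N -> (s.+1 < n)%N ->
  let d := gcdn s.+1 n in
  (k * s.+1 + d - 3 <= r * n - 1)%N ->
  exists pi : {perm 'I_n}, clash_free s k r pi.
Proof.
move=> r_gt0 _ _ n_gt0 _ _ _ d bound.
have n_eq : n = n %/ d * d by rewrite divnK // dvdn_gcdr.
exists (stretch_perm n_gt0 n_eq erefl)^-1%g.
apply: stretch_perm_clash_free.
have : 0 < r * n by rewrite muln_gt0 r_gt0.
lia.
Qed.
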